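(* Let $\tau\in[0,1]$, $K\ge 1$ an integer, and $g_\tau(y)=\ln\big(1+y(e^{\tau}-1)\big)$. Let $\ell_\tau$ be the largest integer $\ell\ge 0$ with $1-e^{-\ell}\le\tau$ (with $\ell_1=\infty$), and let $\ell=\min(\ell_\tau,K)$. Define the multiset $$\mathcal S(\tau)=\{e^{-(k-1)}-e^{-k}: k=1,\dots,\ell\}\cup\{\tau-(1-e^{-\ell})\}.$$ Then for every finite index set $N$ and every vector $(y_j)_{j\in N}$ with $y_j\ge 0$, $\sum_{j\in N}y_j=\tau$, and $\sum_{j\in S}y_j\le 1-e^{-|S|}$ for all $S\subseteq N$ with $|S|\le K$, one has $$\sum_{j\in N}g_\tau(y_j)\ge\sum_{y\in\mathcal S(\tau)}g_\tau(y),$$ and $\mathcal S(\tau)$ (padded with zeros) is itself feasible, so it attains the minimum.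
   Context: The function $g_\tau$ is increasing and concave on $[0,1]$ with $g_\tau(0)=0$. This program arises with $y_j=x_{ij}$ for a fixed offline agent $i$, where the constraints come from $x_i=\tau$ and the benchmark LP constraint $\sum_{j\in S}x_{ij}\le 1-e^{-|S|}$ for $|S|\le K$. *)

From mathcomp Require Import all_boot all_order all_algebra.
From mathcomp Require Import all_classical all_reals.
From mathcomp Require Import sequences exp.
Set Implicit Arguments. Unset Strict Implicit. Unset Printing Implicit Defensive.
Import Order.TTheory GRing.Theory Num.Theory.
Local Open Scope ring_scope.

Definition g_tau {R : realType} (tau y : R) : R := ln (1 + y * (expR tau - 1)).

(* Since l |-> 1 - e^{-l} is increasing, the set of such l
   is downward closed, so min(ell_tau, K) is the largest l <= K with
   1 - e^{-l} <= tau (l = 0 always qualifies when tau >= 0). *)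
Definition ell {R : realType} (tau : R) (K : nat) : nat :=
  (\max_(i < K.+1 | (1 - expR (- (i%:R)) <= tau)%R) (i : nat))%N.

(* The multiset S(tau), indexed by k = 0 .. ell:
   entry k (k < ell) is e^{-k} - e^{-(k+1)}  (the paper's e^{-(k-1)} - e^{-k}, k=1..ell),
   entry ell is tau - (1 - e^{-ell}). *)
Definition Sstar {R : realType} (tau : R) (K : nat) (k : nat) : R :=
  if (k < ell tau K)%N then expR (- (k%:R)) - expR (- (k.+1%:R))
  else tau - (1 - expR (- ((ell tau K)%:R))).

Definition feasible {R : realType} (tau : R) (K : nat) (T : finType) (y : T -> R) : Prop :=
  [/\ (forall j, 0 <= y j),
      \sum_(j : T) y j = tau &
      forall S : {set T}, (#|S| <= K)%N ->
        \sum_(j in S) y j <= 1 - expR (- (#|S|%:R))].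

Definition Spad {R : realType} (tau : R) (K n : nat) (i : 'I_n) : R :=
  if (i < (ell tau K).+1)%N then Sstar tau K i else 0.

From mathcomp Require Import all_boot all_order all_algebra.
From mathcomp Require Import all_classical all_reals.
From mathcomp Require Import sequences exp.
From mathcomp Require Import ring lra.
Import Order.TTheory GRing.Theory Num.Theory.
Set Implicit Arguments. Unset Strict Implicit.
Local Open Scope ring_scope.

(* Write p_0 >= p_1 >= ... for S(tau) followed by zeros: p_k = e^{-k} - e^{-(k+1)}
   for k < ell, p_ell = tau - (1 - e^{-ell}) and p_k = 0 for k > ell.  The lower
   bound is a majorization (Karamata-type) inequality, obtained in three steps.
   1. Threshold domination: for a feasible y and every t >= 0,
      sum_i min(p_i, t) <= sum_j min(y_j, t).  The entries y_j > t form a set S,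
      and the subset constraints bound the mass of S by p_0 + ... + p_{|S|-1}.
   2. A general majorization lemma: if p is nonnegative, strictly decreasing on its
      support and threshold-dominated by a vector y with the same total and
      entries at most p_0, then sum_i g(p_i) <= sum_j g(y_j) for every g with
      g(0) = 0 that is concave on [0, +oo).  Replace g by its piecewise-linear
      interpolant H at the nodes p_k: H <= g and H = g at the nodes, and Abel
      summation writes sum_j H(y_j) - sum_i H(p_i) as a combination of the
      threshold gaps with the (nonnegative) decrements of the chord slopes.
   3. g_tau is concave on [0, +oo) with g_tau(0) = 0, and S(tau) padded with zeros
      is feasible because a set of entries of a nonincreasing sequence weighs at
      most as much as the prefix of the same size. *)

Lemma telescope_ord (V : zmodType) (G : nat -> V) (n : nat) :
  \sum_(k < n) (G k - G k.+1) = G 0%N - G n.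
Proof.
elim: n => [|n IH]; first by rewrite big_ord0 subrr.
by rewrite big_ord_recr /= IH addrA subrK.
Qed.

Lemma abel_summation (R : comNzRingType) (s D : nat -> R) (n : nat) :
  \sum_(k < n.+1) s k * (D k - D k.+1) =
  s 0%N * D 0%N + \sum_(k < n) (s k.+1 - s k) * D k.+1 - s n * D n.+1.
Proof.
elim: n => [|n IH]; first by rewrite big_ord_recr !big_ord0 /=; ring.
by rewrite big_ord_recr /= IH big_ord_recr /=; ring.
Qed.

Lemma sum_set_le_sum (R : numDomainType) (T : finType) (y : T -> R) (S : {set T}) :
  (forall j, 0 <= y j) -> \sum_(j in S) y j <= \sum_j y j.
Proof.
move=> y0; rewrite [X in _ <= X](bigID (mem S)) /= lerDl.
by apply: sumr_ge0 => j _; exact: y0.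
Qed.

Lemma sum_min_le_split (R : realDomainType) (a : nat -> R) (t : R) (s N : nat) :
  0 <= t -> (s <= N)%N ->
  \sum_(i < N) Num.min (a i) t <= s%:R * t + (\sum_(i < N) a i - \sum_(i < s) a i).
Proof.
move=> t0 sN.
rewrite -(big_mkord xpredT (fun i => Num.min (a i) t)) -!(big_mkord xpredT a).
rewrite !(big_cat_nat (leq0n s) sN) /=.
have head : \sum_(0 <= i < s) Num.min (a i) t <= \sum_(0 <= i < s) t.
  by apply: ler_sum => i _; rewrite ge_min lexx orbT.
have tail : \sum_(s <= i < N) Num.min (a i) t <= \sum_(s <= i < N) a i.
  by apply: ler_sum => i _; rewrite ge_min lexx.
rewrite sumr_const_nat subn0 -mulr_natl in head; lra.
Qed.

Lemma sum_set_le_prefix (R : realDomainType) (p : nat -> R) (n : nat) (S : {set 'I_n}) :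
  {homo p : i j / (i <= j)%N >-> j <= i} ->
  \sum_(i in S) p i <= \sum_(k < #|S|) p k.
Proof.
move=> p_anti; set s := #|S|; set t := p s.
have sn : (s <= n)%N by rewrite -[X in (_ <= X)%N]card_ord; exact: max_card.
have excess_S : \sum_(i in S) (p i - t) <= \sum_(i : 'I_n) Num.max (p i - t) 0.
  apply: le_trans (sum_set_le_sum S _); last by move=> i; rewrite le_max lexx orbT.
  by apply: ler_sum => i _; rewrite le_max lexx.
have excess_all : \sum_(i : 'I_n) Num.max (p i - t) 0 = \sum_(k < s) p k - s%:R * t.
  rewrite -(big_mkord xpredT (fun i => Num.max (p i - t) 0)) (big_cat_nat (leq0n s) sn) /=.
  have top : \sum_(0 <= i < s) Num.max (p i - t) 0 = \sum_(0 <= i < s) (p i - t).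
    by apply: eq_big_nat => i /andP[_ hi]; apply/max_idPl; rewrite subr_ge0 p_anti // ltnW.
  have rest : \sum_(s <= i < n) Num.max (p i - t) 0 = 0.
    by rewrite big_nat big1 // => i /andP[hi _]; apply/max_idPr; rewrite subr_le0 p_anti.
  by rewrite top rest addr0 sumrB sumr_const_nat subn0 big_mkord mulr_natl.
move: excess_S; rewrite excess_all sumrB sumr_const; lra.
Qed.

Definition mass (R : realDomainType) (I : finType) (f : I -> R) (t : R) : R :=
  \sum_i Num.min (f i) t.

Lemma mass0 (R : realDomainType) (I : finType) (f : I -> R) :
  (forall i, 0 <= f i) -> mass f 0 = 0.
Proof. by move=> f0; rewrite /mass big1 // => i _; rewrite min_r. Qed.

Section ConcaveChords.
Variables (R : realFieldType) (g : R -> R).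

Hypothesis g_concave : forall u v w : R, 0 <= u -> u <= v -> v <= w ->
  (w - v) * g u + (v - u) * g w <= (w - u) * g v.

Definition chord_slope (u w : R) : R := (g w - g u) / (w - u).

Lemma chord_below (u v w : R) : 0 <= u -> u <= v -> v <= w ->
  chord_slope u w * (v - u) <= g v - g u.
Proof.
move=> u0 uv vw; have := g_concave u0 uv vw; rewrite /chord_slope.
have [wu|wu] := eqVneq w u.
  have -> : v = u by apply/eqP; rewrite eq_le uv andbT -wu.
  by rewrite wu !subrr mulr0.
have wu_gt0 : 0 < w - u by rewrite subr_gt0 lt_def wu (le_trans uv vw).
move=> h; rewrite mulrAC ler_pdivrMr //; nra.
Qed.

Lemma chord_slope_antitone (u v w : R) : 0 <= u -> u < v -> v < w ->
  chord_slope v w <= chord_slope u v.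
Proof.
move=> u0 uv vw; have := g_concave u0 (ltW uv) (ltW vw); rewrite /chord_slope.
have a : 0 < w - v by rewrite subr_gt0.
have b : 0 < v - u by rewrite subr_gt0.
move=> h; rewrite ler_pdivrMr // mulrAC ler_pdivlMr //; nra.
Qed.

End ConcaveChords.

Section Majorization.
Variables (R : realFieldType) (g : R -> R) (p : nat -> R) (L : nat).

Hypothesis g0 : g 0 = 0.
Hypothesis g_concave : forall u v w : R, 0 <= u -> u <= v -> v <= w ->
  (w - v) * g u + (v - u) * g w <= (w - u) * g v.
Hypothesis p_ge0 : forall k, 0 <= p k.
Hypothesis p_decr : forall k, (k < L)%N -> p k.+1 < p k.
Hypothesis p_vanish : forall k, (L < k)%N -> p k = 0.

Lemma p_antitone : {homo p : i j / (i <= j)%N >-> j <= i}.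
Proof.
apply: (@homo_leq _ p (fun a b => b <= a)) => [x|y x z yx zy|k]; first exact: lexx.
  exact: le_trans zy yx.
by case: (ltnP k L) => kL; [exact/ltW/p_decr | rewrite p_vanish].
Qed.

Definition node_slope (k : nat) : R := chord_slope g (p k.+1) (p k).

(* The piecewise-linear interpolant of g at the nodes p_0 > ... > p_L > p_{L+1} = 0. *)
Definition interp (y : R) : R :=
  \sum_(k < L.+1) node_slope k * (Num.min y (p k) - Num.min y (p k.+1)).

Lemma interp_term_le (k : nat) (y : R) : 0 <= y ->
  node_slope k * (Num.min y (p k) - Num.min y (p k.+1)) <=
  g (Num.min y (p k)) - g (Num.min y (p k.+1)).
Proof.
move=> y0; have pk := p_antitone (leqnSn k).
case: (leP y (p k.+1)) => h.
  by rewrite (min_l (le_trans h pk)) !subrr mulr0.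
apply: chord_below => //; first by rewrite le_min pk ltW.
by rewrite ge_min lexx orbT.
Qed.

Lemma interp_term_node (k i : nat) :
  node_slope k * (Num.min (p i) (p k) - Num.min (p i) (p k.+1)) =
  g (Num.min (p i) (p k)) - g (Num.min (p i) (p k.+1)).
Proof.
case: (ltnP k i) => h.
  by rewrite !min_l ?p_antitone ?subrr ?mulr0 // ltnW.
rewrite !min_r ?p_antitone //; last exact: leqW.
rewrite /node_slope /chord_slope.
have [e|ne] := eqVneq (p k) (p k.+1); first by rewrite e !subrr mulr0.
by rewrite divfK // subr_eq0.
Qed.

(* Hence H <= g on [0, p_0] and H = g at the nodes: both sides telescope to
   g(min(y, p_0)) - g(min(y, 0)). *)
Lemma interp_le (y : R) : 0 <= y -> y <= p 0%N -> interp y <= g y.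
Proof.
move=> y0 yp; apply: (@le_trans _ _
    (\sum_(k < L.+1) (g (Num.min y (p k)) - g (Num.min y (p k.+1))))).
  by apply: ler_sum => k _; apply: interp_term_le.
rewrite (telescope_ord (fun k => g (Num.min y (p k)))) /= (min_l yp).
by rewrite (p_vanish (ltnSn L)) (min_r y0) g0 subr0.
Qed.

Lemma interp_node (i : nat) : interp (p i) = g (p i).
Proof.
have -> : interp (p i) =
    \sum_(k < L.+1) (g (Num.min (p i) (p k)) - g (Num.min (p i) (p k.+1))).
  by apply: eq_bigr => k _; apply: interp_term_node.
rewrite (telescope_ord (fun k => g (Num.min (p i) (p k)))) /=.
by rewrite (min_l (p_antitone (leq0n i))) (p_vanish (ltnSn L)) (min_r (p_ge0 i)) g0 subr0.
Qed.

Lemma sum_interp (I : finType) (f : I -> R) :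
  \sum_i interp (f i) =
  \sum_(k < L.+1) node_slope k * (mass f (p k) - mass f (p k.+1)).
Proof.
rewrite /interp exchange_big /=; apply: eq_bigr => k _.
by rewrite /mass -sumrB mulr_sumr.
Qed.

Theorem majorization (T : finType) (y : T -> R) :
  (forall j, 0 <= y j) -> (forall j, y j <= p 0%N) ->
  \sum_j y j = \sum_(i < L.+1) p i ->
  (forall t, 0 <= t -> mass (fun i : 'I_L.+1 => p i) t <= mass y t) ->
  \sum_(i < L.+1) g (p i) <= \sum_j g (y j).
Proof.
move=> y0 yp ysum dom; pose q (i : 'I_L.+1) := p i.
pose gap k := mass y (p k) - mass q (p k).
have gap_ge0 k : 0 <= gap k by rewrite subr_ge0 dom.
have gap_first : gap 0%N = 0.
  rewrite /gap /mass (eq_bigr y) => [|j _]; last by rewrite min_l.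
  rewrite (eq_bigr q) => [|i _]; last by rewrite min_l ?p_antitone.
  by rewrite ysum subrr.
have mass_y0 : mass y 0 = 0 := mass0 y0.
have mass_q0 : mass q 0 = 0 := mass0 (f := q) (fun i => p_ge0 i).
have gap_last : gap L.+1 = 0.
  by rewrite /gap (p_vanish (ltnSn L)) mass_y0 mass_q0 subrr.
have slope_step k : (k < L)%N -> 0 <= (node_slope k.+1 - node_slope k) * gap k.+1.
  move=> kL; have [pk0|pk0] := eqVneq (p k.+1) 0.
    by rewrite /gap pk0 mass_y0 mass_q0 subrr mulr0.
  apply: mulr_ge0 => //; rewrite subr_ge0.
  apply: chord_slope_antitone => //; last exact: p_decr.
  case: (ltnP k.+1 L) => h; first exact: p_decr.
  by rewrite (p_vanish (h : (L < k.+2)%N)) lt_def pk0 p_ge0.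
have -> : \sum_(i < L.+1) g (p i) = \sum_i interp (q i).
  by apply: eq_bigr => i _; rewrite interp_node.
apply: (@le_trans _ _ (\sum_j interp (y j))); last first.
  by apply: ler_sum => j _; apply: interp_le.
rewrite -subr_ge0 !sum_interp -sumrB.
have -> : \sum_(k < L.+1) (node_slope k * (mass y (p k) - mass y (p k.+1)) -
      node_slope k * (mass q (p k) - mass q (p k.+1))) =
    \sum_(k < L.+1) node_slope k * (gap k - gap k.+1).
  by apply: eq_bigr => k _; rewrite /gap; ring.
rewrite abel_summation gap_first gap_last !mulr0 add0r subr0.
by apply: sumr_ge0 => k _; apply: slope_step.
Qed.

End Majorization.

Lemma g_tau0 (R : realType) (tau : R) : g_tau tau 0 = 0.
Proof. by rewrite /g_tau mul0r addr0 ln1. Qed.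

Lemma g_tau_concave (R : realType) (tau u v w : R) :
  0 <= tau -> 0 <= u -> u <= v -> v <= w ->
  (w - v) * g_tau tau u + (v - u) * g_tau tau w <= (w - u) * g_tau tau v.
Proof.
move=> t0 u0 uv vw; rewrite /g_tau.
set c := expR tau - 1.
have c0 : 0 <= c by rewrite /c subr_ge0 -expR0 ler_expR.
set X := 1 + u * c; set V := 1 + v * c; set Y := 1 + w * c.
have X0 : 0 < X by rewrite /X; nra.
have V0 : 0 < V by rewrite /V; nra.
have Y0 : 0 < Y by rewrite /Y; nra.
(* Tangent-line bound ln z <= z - 1 at z = X/V and z = Y/V. *)
have ln_ratio Z : 0 < Z -> ln Z - ln V <= Z / V - 1.
  move=> Z0; rewrite -ln_div ?posrE // -[X in ln X](subrK 1) addrC.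
  by apply: le_ln1Dx; have := divr_gt0 Z0 V0; lra.
have lin : (w - v) * (X / V - 1) + (v - u) * (Y / V - 1) = 0.
  have e : (w - v) * X + (v - u) * Y = (w - u) * V by rewrite /X /Y /V; ring.
  have Vn : V != 0 by exact: lt0r_neq0.
  clearbody X Y V.
  have -> : (w - v) * (X / V - 1) + (v - u) * (Y / V - 1) =
    ((w - v) * X + (v - u) * Y) / V - (w - u) by field.
  by rewrite e mulrK ?unitfE // subrr.
have := ln_ratio X X0; have := ln_ratio Y Y0.
have wv : 0 <= w - v by lra.
have vu : 0 <= v - u by lra.
nra.
Qed.

Lemma ell_spec (R : realType) (tau : R) (K : nat) : 0 <= tau ->
  [/\ (ell tau K <= K)%N, 1 - expR (- ((ell tau K)%:R)) <= tau &
      ((ell tau K < K)%N -> tau < 1 - expR (- ((ell tau K).+1%:R)))].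
Proof.
move=> t0.
have P0 : 1 - expR (- (((@ord0 K) : nat)%:R)) <= tau by rewrite /= oppr0 expR0 subrr.
rewrite /ell (bigop.bigmax_eq_arg ord0 P0).
case: arg_maxnP => //= i Pi maxi.
split => //; first by rewrite -ltnS ltn_ord.
move=> iK; rewrite ltNge; apply/negP => H.
by have := maxi (Ordinal (iK : (i.+1 < K.+1)%N)) H; rewrite /= ltnn.
Qed.

Lemma expRN_nat (R : realType) (k : nat) : expR (- (k%:R)) = expR (-1) ^+ k :> R.
Proof. by rewrite -expRM_natl mulrN1. Qed.

Lemma expRN1_lt_half (R : realType) : 2 * expR (-1) < 1 :> R.
Proof.
have e_gt2 : 1 + 1 < expR 1 :> R by apply: expR_gt1Dx; rewrite oner_eq0.
have inv : expR 1 * expR (-1) = 1 :> R by rewrite expRxMexpNx_1.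
have := expR_gt0 (-1 : R); nra.
Qed.

Definition S_seq (R : realType) (tau : R) (K k : nat) : R :=
  if (k <= ell tau K)%N then Sstar tau K k else 0.

Section SSeq.
Variables (R : realType) (tau : R) (K : nat).
Hypothesis tau01 : 0 <= tau <= 1.

Lemma S_seq_Sstar (k : nat) : (k <= ell tau K)%N -> S_seq tau K k = Sstar tau K k.
Proof. by rewrite /S_seq => ->. Qed.

Lemma S_seq_lt (k : nat) : (k < ell tau K)%N ->
  S_seq tau K k = expR (-1) ^+ k - expR (-1) ^+ k.+1.
Proof. by move=> h; rewrite /S_seq /Sstar (ltnW h) h !expRN_nat. Qed.

Lemma S_seq_last : S_seq tau K (ell tau K) = tau - (1 - expR (-1) ^+ (ell tau K)).
Proof. by rewrite /S_seq /Sstar leqnn ltnn expRN_nat. Qed.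

Lemma S_seq_vanish (k : nat) : (ell tau K < k)%N -> S_seq tau K k = 0.
Proof. by move=> h; rewrite /S_seq leqNgt h. Qed.

Lemma S_seq_prefix_le (s : nat) : (s <= ell tau K)%N ->
  \sum_(k < s) S_seq tau K k = 1 - expR (-1) ^+ s.
Proof.
elim: s => [|s IH] h; first by rewrite big_ord0 expr0 subrr.
by rewrite big_ord_recr /= IH ?(ltnW h) // S_seq_lt //; ring.
Qed.

Lemma S_seq_prefix_gt (s : nat) : (ell tau K < s)%N -> \sum_(k < s) S_seq tau K k = tau.
Proof.
elim: s => [|s IH] //; rewrite ltnS leq_eqVlt => /orP[/eqP e|h].
  by rewrite big_ord_recr /= -e S_seq_prefix_le // S_seq_last; ring.
by rewrite big_ord_recr /= IH // S_seq_vanish // addr0.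
Qed.

Lemma S_seq_ge0 (k : nat) : 0 <= S_seq tau K k.
Proof.
have [t0 _] := andP tau01.
case: (ltngtP k (ell tau K)) => h.
- rewrite S_seq_lt // exprS.
  have x_lt1 : expR (-1) < 1 :> R by rewrite expR_lt1 ltrN10.
  have : 0 <= expR (-1) ^+ k :> R by rewrite exprn_ge0 // expR_ge0.
  have := expR_gt0 (-1 : R); nra.
- by rewrite S_seq_vanish.
- by have [_ + _] := ell_spec K t0; rewrite h S_seq_last expRN_nat; lra.
Qed.

(* The entries of S(tau) strictly decrease: the last one is smaller than its
   predecessor by maximality of ell (or by tau <= 1 < 1 + e^{-k}(1 - 2/e) when
   ell = K). *)
Lemma S_seq_decr (k : nat) : (k < ell tau K)%N -> S_seq tau K k.+1 < S_seq tau K k.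
Proof.
have [t0 t1] := andP tau01; have x2 := expRN1_lt_half R.
have x0 := expR_gt0 (-1 : R).
have xk0 : 0 < expR (-1) ^+ k :> R by rewrite exprn_gt0.
move=> h; rewrite (S_seq_lt h); move: h; rewrite leq_eqVlt => /orP[/eqP e|h].
- rewrite e S_seq_last; have [+ _ ell_max] := ell_spec K t0.
  rewrite leq_eqVlt => /orP[/eqP eK|lK]; first by rewrite -e !exprS; nra.
  by have := ell_max lK; rewrite -e expRN_nat !exprS; nra.
- by rewrite S_seq_lt // !exprS; nra.
Qed.

End SSeq.

(* A feasible vector puts on any set S at most the mass of the |S| largest entries
   of S(tau): for |S| <= ell this is the subset constraint, beyond it the total. *)
Lemma feasible_prefix_bound (R : realType) (tau : R) (K : nat) (T : finType)
    (y : T -> R) (S : {set T}) :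
  0 <= tau -> feasible tau K y -> \sum_(j in S) y j <= \sum_(k < #|S|) S_seq tau K k.
Proof.
move=> t0 [y0 ysum y_sub]; have [ellK _ _] := ell_spec K t0.
case: (leqP #|S| (ell tau K)) => h.
- by rewrite S_seq_prefix_le // -expRN_nat; apply: y_sub; exact: leq_trans h ellK.
- by rewrite S_seq_prefix_gt // -ysum; exact: sum_set_le_sum.
Qed.

Lemma feasible_threshold (R : realType) (tau : R) (K : nat) (T : finType)
    (y : T -> R) (t : R) :
  0 <= tau -> feasible tau K y -> 0 <= t ->
  mass (fun i : 'I_(ell tau K).+1 => S_seq tau K i) t <= mass y t.
Proof.
move=> t0 fy t_ge0; have [y0 ysum _] := fy.
set S := [set j | t < y j]; set L := ell tau K.
have mass_y : mass y t = #|S|%:R * t + (tau - \sum_(j in S) y j).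
  rewrite /mass -ysum (bigID (mem S)) /= [X in _ = _ + (X - _)](bigID (mem S)) /=.
  rewrite (eq_bigr (fun=> t)) => [|j]; last by rewrite inE => /ltW/min_r.
  rewrite [X in _ + X = _](eq_bigr y) => [|j]; last by rewrite inE -leNgt => /min_l.
  by rewrite sumr_const -mulr_natl; ring.
have big_S := feasible_prefix_bound S t0 fy.
rewrite mass_y /mass.
case: (leqP L.+1 #|S|) => hS.
- have := sum_min_le_split (S_seq tau K) t_ge0 (leqnn L.+1).
  rewrite subrr addr0 => split_L.
  have : L.+1%:R * t <= #|S|%:R * t by rewrite ler_wpM2r // ler_nat.
  by move: big_S; rewrite S_seq_prefix_gt //; lra.
- have := sum_min_le_split (S_seq tau K) t_ge0 (ltnW hS).
  by rewrite S_seq_prefix_gt //; lra.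
Qed.

Lemma Sstar_lower_bound (R : realType) (tau : R) (K : nat) (T : finType) (y : T -> R) :
  0 <= tau <= 1 -> feasible tau K y ->
  \sum_(k < (ell tau K).+1) g_tau tau (Sstar tau K k) <= \sum_j g_tau tau (y j).
Proof.
move=> tau01 fy; have [t0 _] := andP tau01; have [y0 ysum _] := fy.
have y_le_top j : y j <= S_seq tau K 0.
  by have := feasible_prefix_bound [set j] t0 fy; rewrite big_set1 cards1 big_ord1.
rewrite (eq_bigr (fun k : 'I_(ell tau K).+1 => g_tau tau (S_seq tau K k))) => [|k _];
  last by rewrite S_seq_Sstar // -ltnS.
apply: (majorization (g_tau0 tau) (fun u v w => g_tau_concave t0)) => //.
- exact: S_seq_ge0.
- exact: S_seq_decr.
- exact: S_seq_vanish.
- by rewrite S_seq_prefix_gt.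
- by move=> t t_ge0; apply: feasible_threshold.
Qed.

Lemma Spad_S_seq (R : realType) (tau : R) (K n : nat) (i : 'I_n) :
  Spad tau K i = S_seq tau K i.
Proof. by rewrite /Spad /S_seq ltnS. Qed.

Lemma Spad_feasible (R : realType) (tau : R) (K n : nat) :
  0 <= tau <= 1 -> ((ell tau K).+1 <= n)%N -> feasible tau K (Spad tau K (n:=n)).
Proof.
move=> tau01 hn; have [t0 _] := andP tau01.
have [_ _ ell_max] := ell_spec K t0.
have S_anti := p_antitone (S_seq_ge0 K tau01) (S_seq_decr tau01) (S_seq_vanish (K:=K)).
split=> [i||S hS]; rewrite ?Spad_S_seq ?S_seq_ge0 //.
  under eq_bigr do rewrite Spad_S_seq.
  by rewrite S_seq_prefix_gt.
under eq_bigr do rewrite Spad_S_seq.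
apply: le_trans (sum_set_le_prefix S S_anti) _.
case: (leqP #|S| (ell tau K)) => h; first by rewrite S_seq_prefix_le // expRN_nat.
rewrite S_seq_prefix_gt //; apply: le_trans (ltW (ell_max (leq_trans h hS))) _.
by rewrite lerD2l lerN2 ler_expR lerN2 ler_nat.
Qed.

Lemma Spad_objective (R : realType) (tau : R) (K n : nat) :
  ((ell tau K).+1 <= n)%N ->
  \sum_(i < n) g_tau tau (Spad tau K i) =
  \sum_(k < (ell tau K).+1) g_tau tau (Sstar tau K k).
Proof.
move=> hn; under eq_bigr do rewrite Spad_S_seq.
rewrite -(big_mkord xpredT (fun i => g_tau tau (S_seq tau K i))).
rewrite (big_cat_nat (leq0n _) hn) /=.
have padding : \sum_((ell tau K).+1 <= i < n) g_tau tau (S_seq tau K i) = 0.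
  by rewrite big_nat big1 // => i /andP[hi _]; rewrite S_seq_vanish ?g_tau0.
rewrite padding addr0 big_mkord; apply: eq_bigr => k _.
by rewrite S_seq_Sstar // -ltnS.
Qed.

Theorem mainTheorem9 (R : realType) (tau : R) (K : nat) :
  0 <= tau <= 1 -> (1 <= K)%N ->
  (forall (T : finType) (y : T -> R), feasible tau K y ->
     \sum_(k < (ell tau K).+1) g_tau tau (Sstar tau K k)
       <= \sum_(j : T) g_tau tau (y j))
  /\
  (forall n : nat, ((ell tau K).+1 <= n)%N ->
     feasible tau K (Spad tau K (n:=n)) /\
     \sum_(i < n) g_tau tau (Spad tau K i)
       = \sum_(k < (ell tau K).+1) g_tau tau (Sstar tau K k)).
Proof.
move=> tau01 _; split=> [T y fy | n hn].
- exact: Sstar_lower_bound.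
- by split; [exact: Spad_feasible | exact: Spad_objective].
Qed.
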